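(* Let $a,\Theta$ be finitely supported complex sequences on $\mathbb Z$ with $\Theta^\star=\Theta$, and let $b_1,b_2$ be finitely supported complex sequences such that $\{a;b_1,b_2\}_{\Theta,(1,-1)}$ is a quasi-tight framelet filter bank and $$\mathrm{S}\Theta(z)=1,\quad \mathrm{S}a(z)=\epsilon z^c,\quad \mathrm{S}b_1(z)=\epsilon_1z^{c_1},\quad \mathrm{S}b_2(z)=\epsilon_2z^{c_2}$$ for some $\epsilon,\epsilon_1,\epsilon_2\in\{\pm1\}$ and $c,c_1,c_2\in\mathbb Z$. Then $c_1+c$ and $c_2+c$ are even.
   Context: Finitely supported sequences $u$ on $\mathbb Z$ are identified with Laurent polynomials $u(z)=\sum_ku(k)z^k$; $u^\star(z):=\sum_k\overline{u(k)}z^{-k}$. $u$ has symmetry of type $\epsilon z^c$ if $u(z)=\epsilon z^cu(z^{-1})$; for nonzero $u$, $\mathrm{S}u(z):=u(z)/u(z^{-1})$; zero has every type. $\{a;b_1,b_2\}_{\Theta,(1,-1)}$ is a quasi-tight framelet filter bank if for all $z\in\mathbb C\setminus\{0\}$: $\Theta(z^2)a^\star(z)a(z)+b_1^\star(z)b_1(z)-b_2^\star(z)b_2(z)=\Theta(z)$ and $\Theta(z^2)a^\star(z)a(-z)+b_1^\star(z)b_1(-z)-b_2^\star(z)b_2(-z)=0$. *)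

From mathcomp Require Import all_boot all_algebra.
From mathcomp Require Export reals complex.
Set Implicit Arguments. Unset Strict Implicit. Unset Printing Implicit Defensive.
Import GRing.Theory Num.Theory.
Local Open Scope ring_scope.

Definition lseq (C : Type) := int -> C.

Definition supp_in (C : numClosedFieldType) (N : nat) (u : lseq C) : Prop :=
  forall k : int, (N%:Z < `|k|)%R -> u k = 0.

Definition lnonzero (C : numClosedFieldType) (u : lseq C) : Prop :=
  exists k : int, u k != 0.

(* Laurent polynomial u(z) = sum_{k=-N}^{N} u(k) z^k  (valid when supp_in N u) *)
Definition lpeval (C : numClosedFieldType) (N : nat) (u : lseq C) (z : C) : C :=
  \sum_(i < (N + N).+1) u (i%:Z - N%:Z) * z ^ (i%:Z - N%:Z).

(* u^star(k) := conj(u(-k)), so u^star(z) = sum_k conj(u(k)) z^{-k} *)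
Definition lstar (C : numClosedFieldType) (u : lseq C) : lseq C :=
  fun k => (u (- k))^*.

Definition has_symtype (C : numClosedFieldType) (N : nat) (u : lseq C)
  (eps : C) (c : int) : Prop :=
  forall z : C, z != 0 -> lpeval N u z = eps * z ^ c * lpeval N u z^-1.

Definition qtffb (C : numClosedFieldType) (N : nat) (Theta a b1 b2 : lseq C) : Prop :=
  forall z : C, z != 0 ->
    lpeval N Theta (z ^+ 2) * lpeval N (lstar a) z * lpeval N a z
      + lpeval N (lstar b1) z * lpeval N b1 z
      - lpeval N (lstar b2) z * lpeval N b2 z = lpeval N Theta z
    /\
    lpeval N Theta (z ^+ 2) * lpeval N (lstar a) z * lpeval N a (- z)
      + lpeval N (lstar b1) z * lpeval N b1 (- z)
      - lpeval N (lstar b2) z * lpeval N b2 (- z) = 0.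

From mathcomp Require Import all_boot all_algebra.
From mathcomp Require Import reals complex.
From mathcomp Require Import all_order ring zify.
Set Implicit Arguments. Unset Strict Implicit. Unset Printing Implicit Defensive.
Import Order.TTheory GRing.Theory Num.Theory.
Local Open Scope ring_scope.

(* Write T_u(z) := u^*(z) u(-z).  A symmetry of type eps z^c with eps = +-1
   gives T_u(1/z) = (-1)^c T_u(z), and Theta(1/z^2) = Theta(z^2).  Evaluating
   the alias-cancellation identity Theta(z^2) T_a + T_b1 - T_b2 = 0 at z and at
   1/z thus yields the same identity with the signs (-1)^(c+c1), (-1)^(c+c2)
   in front of T_b1, T_b2.  If either sign were -1, combining the two
   identities would force T_b1, T_b2 or Theta(z^2) T_a to vanish on C^x, which
   is impossible for nonzero Laurent polynomials. *)

Lemma expN1z_pm (R : numDomainType) (n : int) :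
  (-1 : R) ^ n = 1 \/ (-1 : R) ^ n = -1.
Proof. by rewrite expN1r -signr_odd; case: odd; [right | left]. Qed.

Lemma expN1z_eq1 (R : numDomainType) (n : int) : ((-1 : R) ^ n == 1) = (2 %| n)%Z.
Proof.
rewrite expN1r -signr_odd dvdzE /= dvdn2; case: odd; rewrite ?expr0 ?eqxx // expr1.
by rewrite eq_sym -addr_eq0 -mulr2n mulrn_eq0 oner_eq0.
Qed.

Section LaurentPolynomials.
Variable C : numClosedFieldType.
Implicit Types (N : nat) (u : lseq C) (z e : C) (c : int) (f g : C -> C).

Definition lpoly N u : {poly C} := \poly_(i < (N + N).+1) u (i%:Z - N%:Z).

Lemma lpevalE N u z : z != 0 -> lpeval N u z = (lpoly N u).[z] * z ^- N.
Proof.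
move=> nz; rewrite /lpeval horner_poly big_distrl; apply: eq_bigr => i _.
by rewrite exprzDr ?unitfE // exprnN mulrA.
Qed.

Lemma lpoly_neq0 N u : supp_in N u -> lnonzero u -> lpoly N u != 0.
Proof.
move=> hs [k uk]; have kN : `|k| <= N%:Z by rewrite leNgt; apply: contra uk => /hs ->.
move: kN; rewrite ler_norml => /andP[Nk kN].
have kN0 : 0 <= k + N%:Z by lia.
apply: contraNneq uk => /(congr1 (coefp (absz (k + N%:Z)))) /=.
rewrite coef_poly coef0 ifT; last by lia.
by rewrite gez0_abs // addrK => ->.
Qed.

(* A stand-in for "nonzero Laurent polynomial" that is stable under products
   and under the substitutions z -> -z and z -> z^2. *)
Definition sparse_zeros f :=
  exists2 p : {poly C}, p != 0 & forall z, z != 0 -> f z = 0 -> root p z.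

Lemma sparse_zeros_lpeval N u :
  supp_in N u -> lnonzero u -> sparse_zeros (lpeval N u).
Proof.
move=> hs hn; exists (lpoly N u); first exact: lpoly_neq0.
move=> z nz /eqP; rewrite lpevalE // mulf_eq0 invr_eq0 expf_eq0 (negbTE nz).
by rewrite andbF orbF.
Qed.

Lemma sparse_zerosM f g :
  sparse_zeros f -> sparse_zeros g -> sparse_zeros (fun z => f z * g z).
Proof.
move=> [p p0 hp] [q q0 hq]; exists (p * q); first by rewrite mulf_neq0.
move=> z nz /eqP; rewrite mulf_eq0 rootM => /orP[] /eqP fz0.
  by rewrite hp.
by rewrite hq ?orbT.
Qed.

Lemma sparse_zerosN f : sparse_zeros f -> sparse_zeros (fun z => f (- z)).
Proof.
move=> [p p0 hp]; exists (p \Po - 'X).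
  by rewrite comp_poly2_eq0 // size_polyN size_polyX.
move=> z nz fz0; rewrite /root horner_comp hornerN hornerX.
by apply: hp fz0; rewrite oppr_eq0.
Qed.

Lemma sparse_zerosX2 f : sparse_zeros f -> sparse_zeros (fun z => f (z ^+ 2)).
Proof.
move=> [p p0 hp]; exists (p \Po 'X^2); first by rewrite comp_poly_eq0 // size_polyXn.
move=> z nz fz0; rewrite /root horner_comp hornerXn.
by apply: hp fz0; rewrite expf_neq0.
Qed.

Lemma sparse_zeros_not_vanishing f :
  sparse_zeros f -> ~ (forall z, z != 0 -> f z = 0).
Proof.
move=> [p /eqP p0 hp] f0; apply: p0.
apply: (@roots_geq_poly_eq0 _ p [seq i.+1%:R | i <- iota 0 (size p)]).
- by apply/allP => _ /mapP[i _ ->]; rewrite hp ?f0 ?pnatr_eq0.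
- by rewrite map_inj_uniq ?iota_uniq // => i j /eqP; rewrite eqr_nat eqSS => /eqP.
- by rewrite size_map size_iota.
Qed.

Lemma supp_in_lstar N u : supp_in N u -> supp_in N (lstar u).
Proof. by move=> hs k hk; rewrite /lstar hs ?normrN // conjC0. Qed.

Lemma lnonzero_lstar u : lnonzero u -> lnonzero (lstar u).
Proof. by move=> [k uk]; exists (- k); rewrite /lstar opprK conjC_eq0. Qed.

Lemma lpeval_lstar N u z :
  z != 0 -> lpeval N (lstar u) z = (lpeval N u (z^*)^-1)^*.
Proof.
move=> nz; rewrite /lpeval rmorph_sum /= (reindex_inj rev_ord_inj) /=.
apply: eq_bigr => i _; rewrite /lstar rmorphM /= rmorphXz ?unitfE ?invr_eq0 ?conjC_eq0 //.
rewrite fmorphV /= conjCK exprz_inv.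
have -> : ((N + N).+1 - i.+1)%N%:Z - N%:Z = - (i%:Z - N%:Z) by have := ltn_ord i; lia.
by rewrite opprK.
Qed.

Lemma has_symtype_lstar N u e c :
  e^* = e -> has_symtype N u e c -> has_symtype N (lstar u) e (- c).
Proof.
move=> ee hs z nz; rewrite !lpeval_lstar ?invr_eq0 // fmorphV /= invrK.
rewrite hs ?invr_eq0 ?conjC_eq0 // invrK !rmorphM /= ee.
by rewrite rmorphXz ?unitfE ?invr_eq0 ?conjC_eq0 // fmorphV /= conjCK exprz_inv.
Qed.

Definition lcross N u z := lpeval N (lstar u) z * lpeval N u (- z).

Lemma sparse_zeros_lcross N u :
  supp_in N u -> lnonzero u -> sparse_zeros (lcross N u).
Proof.
move=> hs hn; exact: sparse_zerosM
  (sparse_zeros_lpeval (supp_in_lstar hs) (lnonzero_lstar hn))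
  (sparse_zerosN (sparse_zeros_lpeval hs hn)).
Qed.

Lemma lcrossV N u e c z : e = 1 \/ e = -1 -> has_symtype N u e c -> z != 0 ->
  lcross N u z^-1 = (-1) ^ c * lcross N u z.
Proof.
move=> e_pm hs nz; have ee : e^* = e by case: e_pm => ->; rewrite ?rmorphN rmorph1.
have e2 : e * e = 1 by case: e_pm => ->; rewrite ?mulrNN mulr1.
have nz' : (- z)^-1 != 0 by rewrite invr_eq0 oppr_eq0.
rewrite /lcross (has_symtype_lstar ee hs (invr_neq0 nz)) invrK.
rewrite -[- z^-1]invrN (hs _ nz') invrK invrN expNrz !exprz_inv opprK.
transitivity ((e * e) * (z ^ c * z ^ (- c)) * (-1) ^ c *
  (lpeval N (lstar u) z * lpeval N u (- z))); first ring.
by rewrite e2 -exprzDr ?unitfE // subrr expr0z !mul1r.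
Qed.

Lemma alias_signs_eq1 (X Y W : C -> C) (s1 s2 : C) :
  sparse_zeros X -> sparse_zeros Y -> sparse_zeros W ->
  s1 = 1 \/ s1 = -1 -> s2 = 1 \/ s2 = -1 ->
  (forall z, z != 0 -> X z + Y z - W z = 0 /\ X z + s1 * Y z - s2 * W z = 0) ->
  s1 = 1 /\ s2 = 1.
Proof.
have half_eq0 (x : C) : x *+ 2 = 0 -> x = 0 by move/eqP; rewrite mulrn_eq0 => /eqP.
move=> hX hY hW [->|->] [->|->] XYW //; exfalso.
- apply: (sparse_zeros_not_vanishing hW) => z /XYW[e1 e2]; apply: half_eq0.
  have -> : W z *+ 2 = (X z + 1 * Y z - (-1) * W z) - (X z + Y z - W z) by ring.
  by rewrite e1 e2 subrr.
- apply: (sparse_zeros_not_vanishing hY) => z /XYW[e1 e2]; apply: half_eq0.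
  have -> : Y z *+ 2 = (X z + Y z - W z) - (X z + (-1) * Y z - 1 * W z) by ring.
  by rewrite e1 e2 subrr.
- apply: (sparse_zeros_not_vanishing hX) => z /XYW[e1 e2]; apply: half_eq0.
  have -> : X z *+ 2 = (X z + Y z - W z) + (X z + (-1) * Y z - (-1) * W z) by ring.
  by rewrite e1 e2 addr0.
Qed.

Lemma qtffb_alias_identities N Theta a b1 b2 eps eps1 eps2 c c1 c2 z :
  qtffb N Theta a b1 b2 -> has_symtype N Theta 1 0 ->
  eps = 1 \/ eps = -1 -> eps1 = 1 \/ eps1 = -1 -> eps2 = 1 \/ eps2 = -1 ->
  has_symtype N a eps c -> has_symtype N b1 eps1 c1 -> has_symtype N b2 eps2 c2 ->
  z != 0 ->
  let X := lpeval N Theta (z ^+ 2) * lcross N a z in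
  X + lcross N b1 z - lcross N b2 z = 0 /\
  X + (-1) ^ (c + c1) * lcross N b1 z - (-1) ^ (c + c2) * lcross N b2 z = 0.
Proof.
move=> hq hT he he1 he2 ha hb1 hb2 nz X.
have [_ alias_z] := hq z nz; have [_ alias_zV] := hq z^-1 (invr_neq0 nz).
have hTV : lpeval N Theta (z^-1 ^+ 2) = lpeval N Theta (z ^+ 2).
  by rewrite (hT (z ^+ 2)) ?expf_neq0 // expr0z !mul1r exprVn.
split; first by move: alias_z; rewrite /X /lcross !mulrA.
move: alias_zV; rewrite -mulrA -!/(lcross _ _ _) hTV.
rewrite (lcrossV he ha nz) (lcrossV he1 hb1 nz) (lcrossV he2 hb2 nz) => alias_zV.
have sc2 : (-1) ^ c * (-1) ^ c = 1 :> C by rewrite expN1r -expr2 sqrr_sign.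
rewrite !exprzDr ?unitfE ?oppr_eq0 ?oner_eq0 // -[X]mul1r -{1}sc2.
by rewrite -(mulr0 ((-1) ^ c)) -alias_zV /X; ring.
Qed.

End LaurentPolynomials.

Theorem theorem4p2 (R : realType) (N : nat) (Theta a b1 b2 : int -> R[i])
  (eps eps1 eps2 : R[i]) (c c1 c2 : int) :
  supp_in N Theta -> supp_in N a -> supp_in N b1 -> supp_in N b2 ->
  lstar Theta = Theta ->
  lnonzero Theta -> lnonzero a -> lnonzero b1 -> lnonzero b2 ->
  qtffb N Theta a b1 b2 ->
  (eps = 1 \/ eps = -1) -> (eps1 = 1 \/ eps1 = -1) -> (eps2 = 1 \/ eps2 = -1) ->
  has_symtype N Theta 1 0 ->
  has_symtype N a eps c -> has_symtype N b1 eps1 c1 -> has_symtype N b2 eps2 c2 ->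
  (2 %| c1 + c)%Z /\ (2 %| c2 + c)%Z.
Proof.
move=> sT sa sb1 sb2 _ nT na nb1 nb2 hq he he1 he2 hT ha hb1 hb2.
pose X z := lpeval N Theta (z ^+ 2) * lcross N a z.
have sX : sparse_zeros X := sparse_zerosM
  (sparse_zerosX2 (sparse_zeros_lpeval sT nT)) (sparse_zeros_lcross sa na).
have [s1 s2] : (-1 : R[i]%type) ^ (c + c1) = 1 /\ (-1 : R[i]%type) ^ (c + c2) = 1.
  apply: (alias_signs_eq1 sX (sparse_zeros_lcross sb1 nb1)
                          (sparse_zeros_lcross sb2 nb2)) => [||z nz].
  - exact: expN1z_pm.
  - exact: expN1z_pm.
  exact: qtffb_alias_identities hq hT he he1 he2 ha hb1 hb2 nz.
by rewrite !(addrC _ c) -!(expN1z_eq1 R[i]%type) s1 s2 eqxx.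
Qed.
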